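(* Let $A=[a_{ij}]\in\{0,1\}^{N\times N}$ be the adjacency matrix of a static contact graph on nodes $\{1,\dots,N\}$ (with $a_{ii}=0$) and let $\rho(A)$ be its spectral radius. Let $\beta_0>0$, $\delta>0$, $\kappa>0$, $0\le\beta_a<\beta_0$, and define \[ \beta_{eq}=\beta_0\frac{\beta_a/\kappa}{1+\beta_a/\kappa}+\beta_a\frac{1}{1+\beta_a/\kappa}. \] Consider the SAIS system \[ \dot p_i=\beta_0(1-p_i-q_i)\sum_{j=1}^N a_{ij}p_j+\beta_a q_i\sum_{j=1}^N a_{ij}p_j-\delta p_i,\qquad \dot q_i=\kappa(1-p_i-q_i)\sum_{j=1}^N a_{ij}p_j-\beta_a q_i\sum_{j=1}^N a_{ij}p_j, \] $i\in\{1,\dots,N\}$. If $\frac{\beta_{eq}}{\delta}<\frac{1}{\rho(A)}$, then small initial infections die out asymptotically, i.e. $p_i(t)\to0$ as $t\to\infty$ for all $i$.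
   Context: $p_i$ and $q_i$ are the (mean-field) probabilities that individual $i$ is infected and alert; $a_{ij}=1$ iff individual $j$ is a neighbor of individual $i$. $\beta_0$: infection rate of susceptible individuals; $\beta_a$: infection rate of alert individuals; $\kappa$: alerting rate; $\delta$: curing rate. ''Small initial infections'' refers to initial conditions near the infection-free equilibrium set (local result). *)

From HB Require Import structures.
From mathcomp Require Import all_boot all_order all_algebra.
From mathcomp Require Import all_classical all_reals all_analysis.
From mathcomp Require complex.
Import complex.ComplexField.
Set Implicit Arguments. Unset Strict Implicit. Unset Printing Implicit Defensive.
Import Order.TTheory GRing.Theory Num.Theory.
Import numFieldNormedType.Exports.
Local Open Scope classical_set_scope.
Local Open Scope ring_scope.

Definition spectral_radius (R : realType) (N : nat) (A : 'M[R]_N) : R :=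
  sup [set complex.Re `|l| | l in
        [set l : complex.complex R |
          eigenvalue (map_mx (fun x : R => complex.real_complex R x) A) l]].

Definition adjacency01 (R : realType) (N : nat) (A : 'M[R]_N) : Prop :=
  (forall i j, A i j = 0 \/ A i j = 1) /\ (forall i, A i i = 0).

Definition beta_eq (R : realType) (beta0 betaa kappa : R) : R :=
  beta0 * ((betaa / kappa) / (1 + betaa / kappa))
  + betaa * (1 / (1 + betaa / kappa)).

Definition SAIS_solution (R : realType) (N : nat) (A : 'M[R]_N)
    (beta0 betaa kappa delta : R) (p q : R -> 'I_N -> R) : Prop :=
  forall i : 'I_N,
    {within `[0, +oo[, continuous (fun t => p t i)} /\
    {within `[0, +oo[, continuous (fun t => q t i)} /\
    (forall t : R, 0 < t ->
       is_derive t 1 (fun s => p s i)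
         (beta0 * (1 - p t i - q t i) * (\sum_(j < N) A i j * p t j)
          + betaa * q t i * (\sum_(j < N) A i j * p t j)
          - delta * p t i)) /\
    (forall t : R, 0 < t ->
       is_derive t 1 (fun s => q s i)
         (kappa * (1 - p t i - q t i) * (\sum_(j < N) A i j * p t j)
          - betaa * q t i * (\sum_(j < N) A i j * p t j))).

(* Feasible state: p_i, q_i are probabilities of disjoint events. *)
Definition feasible_state (R : realType) (N : nat) (p0 q0 : 'I_N -> R) : Prop :=
  forall i, 0 <= p0 i /\ 0 <= q0 i /\ p0 i + q0 i <= 1.

From HB Require Import structures.
From mathcomp Require Import all_boot all_order all_algebra.
From mathcomp Require Import all_classical all_reals all_analysis.
From mathcomp Require Import complex.
From mathcomp Require Import ring lra.
Import Order.TTheory GRing.Theory Num.Theory.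
Import numFieldNormedType.Exports.
Set Implicit Arguments. Unset Strict Implicit. Unset Printing Implicit Defensive.
Local Open Scope classical_set_scope.
Local Open Scope ring_scope.

(* Feasibility (p, q >= 0, p + q <= 1) is forward invariant: a negative
   coordinate can only decrease at a rate proportional to the total negativity,
   which a Gronwall-type argument rules out.  With c = (beta_a - beta_0) /
   (kappa + beta_a) the combination p_i + c q_i evolves as an SIS model,
   d/dt (p_i + c q_i) = beta_eq (1 - p_i) (A p)_i - delta p_i.  Pick mu with
   rho(A) < mu and beta_eq mu < delta; the row vector v = 1^T (mu I - A)^-1 is
   positive with v^T A <= mu v^T, so V = sum_i v_i (p_i + c q_i) is bounded below
   and dV/dt <= -(delta - beta_eq mu) sum_i v_i p_i.  Since each p_i decreases at
   rate at most delta, V would be driven to -oo unless every p_i tends to 0;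
   hence the infection dies out from every feasible initial state. *)

Section RealFunctions.
Variable R : realType.
Implicit Types (f df : R -> R) (a b c u : R).

Lemma sum_continuous_at (T : topologicalType) (I : Type) (s : seq I)
    (F : I -> T -> R) (x : T) :
  (forall i, {for x, continuous (F i)}) ->
  {for x, continuous (fun t => \sum_(i <- s) F i t)}.
Proof. by move=> cF; apply: cvg_big => //; [exact: add_continuous | move=> i _; exact: cF]. Qed.

Lemma bigmin_continuous_at (T : topologicalType) (I : Type) (s : seq I)
    (F : I -> T -> R) (x0 : R) (x : T) :
  (forall i, {for x, continuous (F i)}) ->
  {for x, continuous (fun t => \big[Order.min/x0]_(i <- s) F i t)}.
Proof. by move=> cF; apply: cvg_big => //; [exact: min_continuous | move=> i _; exact: cF]. Qed.

Lemma within_continuous_lt f a b c y :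
  {within `[a, b], continuous f} -> c \in `[a, b] -> f c < y ->
  exists2 d : R, 0 < d & forall u, u \in `[a, b] -> `|u - c| < d -> f u < y.
Proof.
move=> cf cab fcy.
have := @cvgr_lt _ _ _ _ (f : subspace `[a, b] -> R) (f c) (cf c) y fcy.
rewrite /prop_near1 /nbhs /= -nbhs_subspace_in; last by rewrite inE in cab.
move=> /(_ (within_filter _ _)) [d d0 near_c]; exists d => // u uab ud.
by apply: near_c => //; rewrite /ball_ /= distrC.
Qed.

Lemma within_continuous_gt f a b c y :
  {within `[a, b], continuous f} -> c \in `[a, b] -> y < f c ->
  exists2 d : R, 0 < d & forall u, u \in `[a, b] -> `|u - c| < d -> y < f u.
Proof.
move=> cf cab yfc.
have cNf : {within `[a, b], continuous (fun x => - f x)}.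
  by move=> x; apply: continuousN; exact: cf.
have [|d d0 near_c] := within_continuous_lt (y := - y) cNf cab; first by rewrite ltrN2.
by exists d => // u uab ud; rewrite -ltrN2; exact: near_c.
Qed.

Lemma within_continuous_subitv f a b c d :
  a <= c -> d <= b -> {within `[a, b], continuous f} -> {within `[c, d], continuous f}.
Proof. by move=> ac db; apply: continuous_subspaceW; apply: subset_itv; rewrite bnd_simp. Qed.

Lemma last_root_before_pos f a b :
  a <= b -> {within `[a, b], continuous f} -> f a <= 0 -> 0 < f b ->
  exists c, [/\ a <= c, c < b, f c = 0 & forall u, c < u -> u <= b -> 0 < f u].
Proof.
move=> ab cf fa fb.
pose S := [set u | a <= u /\ u <= b /\ f u <= 0].
have hS : has_sup S by split; [exists a; rewrite /S /= lexx ab fa | exists b => u [_ []]].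
set c := sup S.
have Sle u : S u -> u <= c by move=> Su; exact: sup_upper_bound.
have ac : a <= c by apply: Sle; rewrite /S /= lexx ab fa.
have cb : c <= b by apply: ge_sup; [exists a; rewrite /S /= lexx ab fa | move=> u [_ []]].
have cab : c \in `[a, b] by rewrite in_itv /= ac cb.
have fc0 : f c = 0.
  case: (ltgtP (f c) 0) => // [fcn|fcp].
  - have [|c' c'in fc'] := IVT (v := 0) cb (within_continuous_subitv ac (lexx b) cf).
      by rewrite ge_min le_max (ltW fcn) (ltW fb) orbT.
    move: c'in; rewrite in_itv /= => /andP[cc' c'b].
    have c'c : c' <= c by apply: Sle; rewrite /S /= fc' lexx c'b (le_trans ac cc').
    have -> : c = c' by apply/eqP; rewrite eq_le cc' c'c.
    by rewrite fc'.
  - have [d d0 near_c] := within_continuous_gt cf cab fcp.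
    have [e [ae [eb fe]] ce] := sup_adherent d0 hS.
    have : 0 < f e.
      apply: near_c; first by rewrite in_itv /= ae eb.
      by rewrite ler0_norm ?subr_le0 ?Sle // opprB ltrBlDr addrC -ltrBlDr.
    by rewrite ltNge fe.
have cltb : c < b by rewrite lt_neqAle cb andbT; apply: contraTneq fb => <-; rewrite fc0 ltxx.
exists c; split => // u cu ub; rewrite ltNge; apply/negP => fu.
have : S u by rewrite /S /= ub fu (le_trans ac (ltW cu)).
by move/Sle; rewrite leNgt cu.
Qed.

Lemma derive_continuous_at f (t dv : R) : is_derive t 1 f dv -> {for t, continuous f}.
Proof. by move=> [d _]; apply: differentiable_continuous; apply/derivable1_diffP. Qed.

Lemma MVT_pos f df a b : 0 < a -> a <= b ->
  (forall t : R, 0 < t -> is_derive t 1 f (df t)) ->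
  exists2 c, a <= c <= b & f b - f a = df c * (b - a).
Proof.
move=> a0 ab hd.
have der_ab x : x \in `]a, b[ -> is_derive x 1 f (df x).
  by rewrite in_itv /= => /andP[ax _]; apply: hd; exact: lt_trans ax.
have cont_ab : {within `[a, b], continuous f}.
  apply: continuous_in_subspaceT => x; rewrite inE /= in_itv /= => /andP[ax _].
  by apply: derive_continuous_at; apply: hd; exact: lt_le_trans ax.
have [c cab eq] := MVT_segment ab der_ab cont_ab.
by exists c => //; move: cab; rewrite in_itv.
Qed.

Lemma slope_lower_bound f df a b K :
  0 <= K -> {within `[a, b], continuous f} ->
  (forall t : R, a < t <= b -> is_derive t 1 f (df t)) -> 0 <= f a ->
  (forall t, a < t <= b -> f t < 0 -> - K <= df t) ->
  forall u, a <= u <= b -> - (K * (u - a)) <= f u.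
Proof.
move=> K0 cf hd fa slope u /andP[au ub].
have Ka0 : 0 <= K * (u - a) by rewrite mulr_ge0 // subr_ge0.
case: (leP 0 (f u)) => [fu0|fu_neg]; first by apply: le_trans fu0; rewrite oppr_le0.
have au_lt : a < u by rewrite lt_neqAle au andbT; apply: contraTneq fu_neg => <-; rewrite -leNgt.
have cNf : {within `[a, u], continuous (fun t => - f t)}.
  by move=> v; apply: continuousN; exact: (within_continuous_subitv (lexx a) ub cf).
have Nfa : - f a <= 0 by rewrite oppr_le0.
have Nfu : 0 < - f u by rewrite oppr_gt0.
have [c [ac cu fc0 fneg]] := last_root_before_pos (ltW au_lt) cNf Nfa Nfu.
have der_cu v : v \in `]c, u[ -> is_derive v 1 f (df v).
  by rewrite in_itv /= => /andP[cv vu]; apply: hd; rewrite (le_lt_trans ac cv) (le_trans (ltW vu) ub).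
have [xi /[!in_itv] /= /andP[cxi xiu] eqxi] :=
  MVT cu der_cu (within_continuous_subitv ac (lexx u) (within_continuous_subitv (lexx a) ub cf)).
have dfxi : - K <= df xi.
  apply: slope; first by rewrite (le_lt_trans ac cxi) (le_trans (ltW xiu) ub).
  by rewrite -oppr_gt0; exact: fneg cxi (ltW xiu).
have fc : f c = 0 by apply/eqP; rewrite -oppr_eq0 fc0.
move: eqxi; rewrite fc subr0 => ->.
have : - K * (u - c) <= df xi * (u - c) by apply: ler_wpM2r => //; rewrite subr_ge0 ltW.
have : K * (u - c) <= K * (u - a) by apply: ler_wpM2l => //; lra.
lra.
Qed.

Definition negpart (y : R) : R := Num.max 0 (- y).

Lemma negpart_ge0 y : 0 <= negpart y.
Proof. by rewrite /negpart le_max lexx. Qed.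

Lemma negpart_eq0 y : 0 <= y -> negpart y = 0.
Proof. by move=> y0; rewrite /negpart max_l // oppr_le0. Qed.

Lemma negpart_lt0 y : y < 0 -> negpart y = - y.
Proof. by move=> y0; rewrite /negpart max_r // oppr_ge0 ltW. Qed.

Lemma Nnegpart_le y : - negpart y <= y.
Proof. by rewrite /negpart lerNl le_max lexx orbT. Qed.

Lemma negpart_le y m : 0 <= m -> - m <= y -> negpart y <= m.
Proof. by move=> m0 ym; rewrite /negpart ge_max m0 lerNl. Qed.

Lemma negpart_continuous_at (T : topologicalType) (g : T -> R) (x : T) :
  {for x, continuous g} -> {for x, continuous (fun t => negpart (g t))}.
Proof. by move=> cg; apply: continuous_max; [exact: cst_continuous | exact: continuousN]. Qed.

Section NonnegInvariance.
Variables (K : finType) (x dx : K -> R -> R) (L : R).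

Definition negsum t := \sum_k negpart (x k t).

Hypothesis L_ge0 : 0 <= L.
Hypothesis x_cont : forall k, {within `[0, +oo[, continuous (x k)}.
Hypothesis x_derive : forall k (t : R), 0 < t -> is_derive t 1 (x k) (dx k t).
Hypothesis dx_ge : forall t : R, 0 < t -> (forall j, -1 <= x j t) ->
  forall k, x k t < 0 -> - (L * negsum t) <= dx k t.

Lemma negsum_ge0 t : 0 <= negsum t.
Proof. by apply: sumr_ge0 => k _; exact: negpart_ge0. Qed.

Lemma negpart_le_negsum k t : negpart (x k t) <= negsum t.
Proof. by rewrite /negsum (bigD1 k) //= lerDl; apply: sumr_ge0 => j _; exact: negpart_ge0. Qed.

Lemma Nnegsum_le k t : - negsum t <= x k t.
Proof. by apply: le_trans (Nnegpart_le _); rewrite lerN2 negpart_le_negsum. Qed.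

Lemma negsum_eq0 t : negsum t = 0 -> forall k, 0 <= x k t.
Proof. by move=> n0 k; have := Nnegsum_le k t; rewrite n0 oppr0. Qed.

Lemma x_cont_within a b : 0 <= a -> forall k, {within `[a, b], continuous (x k)}.
Proof.
move=> a0 k; apply: (continuous_subspaceW _ (@x_cont k)) => u.
by rewrite /= !in_itv /= andbT => /andP[au _]; exact: le_trans au.
Qed.

Lemma negsum_cont_within a b : 0 <= a -> {within `[a, b], continuous negsum}.
Proof.
move=> a0 u; apply: sum_continuous_at => k; apply: negpart_continuous_at.
exact: x_cont_within.
Qed.

Lemma ge_negsum_bound u0 b M : 0 <= u0 -> negsum u0 = 0 -> 0 <= M ->
  (forall t, u0 < t <= b -> negsum t < 1) -> (forall t, u0 < t <= b -> negsum t <= M) ->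
  forall k u, u0 <= u <= b -> - (L * M * (u - u0)) <= x k u.
Proof.
move=> u00 nu0 M0 n_lt1 n_le k; apply: slope_lower_bound (mulr_ge0 L_ge0 M0) _ _ _ _.
- exact: x_cont_within.
- by move=> t /andP[u0t _]; apply: x_derive; exact: le_lt_trans u0t.
- exact: negsum_eq0 nu0 k.
move=> t t_bnd xt.
have x_ge1 j : -1 <= x j t by apply: le_trans (Nnegsum_le j t); rewrite lerN2 ltW ?n_lt1.
have t0 : 0 < t by case/andP: t_bnd => u0t _; exact: le_lt_trans u0t.
apply: le_trans (dx_ge t0 x_ge1 xt); rewrite lerN2 ler_wpM2l //; exact: n_le.
Qed.

(* A Gronwall-type step: on a short interval [u0, u0 + del] each x k is at least
   -L M del, with M the maximum of negsum there, so M <= L #|K| del M forces M = 0. *)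
Lemma negsum_eq0_near u0 : 0 <= u0 -> negsum u0 = 0 ->
  exists2 del, 0 < del & forall u, u0 <= u <= u0 + del -> negsum u = 0.
Proof.
move=> u00 nu0.
have u0_in : u0 \in `[u0, u0 + 1] by rewrite in_itv /= lexx lerDl ler01.
have nu0_lt1 : negsum u0 < 1 by rewrite nu0 ltr01.
have [d1 d10 n_lt1] := within_continuous_lt (negsum_cont_within (b := u0 + 1) u00) u0_in nu0_lt1.
pose KL := L * #|K|%:R.
have KL0 : 0 <= KL by rewrite mulr_ge0.
pose del := Num.min (Num.min (d1 / 2) 1) (1 / (2 * (KL + 1))).
have del_d1 : del <= d1 / 2 by rewrite /del !ge_min lexx.
have del_1 : del <= 1 by rewrite /del !ge_min lexx orbT.
have del_KL : del <= 1 / (2 * (KL + 1)) by rewrite /del ge_min lexx orbT.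
have del0 : 0 < del by rewrite !lt_min !divr_gt0 ?ltr01 // ?mulr_gt0 // ltr_pwDr.
have KLdel : KL * del < 1.
  apply: le_lt_trans (ler_wpM2l KL0 del_KL) _.
  by rewrite mul1r ltr_pdivrMr ?mulr_gt0 ?ltr_pwDr // mul1r; nra.
have u0_del : u0 <= u0 + del by rewrite lerDl ltW.
have [c c_in n_max] := EVT_max u0_del (negsum_cont_within (b := u0 + del) u00).
set M := negsum c.
have M0 : 0 <= M by rewrite -nu0; apply: n_max; rewrite in_itv /= lexx u0_del.
have n_lt1' t : u0 < t <= u0 + del -> negsum t < 1.
  move=> /andP[u0t tb]; apply: n_lt1.
    by rewrite in_itv /= (ltW u0t) (le_trans tb) // lerD2l.
  by rewrite ger0_norm ?subr_ge0 ?(ltW u0t) //; lra.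
have n_le t : u0 < t <= u0 + del -> negsum t <= M.
  by move=> /andP[u0t tb]; apply: n_max; rewrite in_itv /= tb ltW.
have x_ge := ge_negsum_bound u00 nu0 M0 n_lt1' n_le.
have : M <= KL * del * M.
  have : M <= \sum_(k : K) L * M * del.
    apply: ler_sum => k _; apply: negpart_le; first by rewrite !mulr_ge0 // ltW.
    have [u0c cb] : u0 <= c /\ c <= u0 + del by move: c_in; rewrite in_itv => /andP.
    apply: le_trans (x_ge k c _); last by rewrite u0c cb.
    by rewrite lerN2 ler_wpM2l ?mulr_ge0 //; lra.
  by rewrite sumr_const -mulr_natr /KL; lra.
move=> MKL; have M_eq0 : M = 0 by apply/eqP; rewrite eq_le M0 andbT; nra.
exists del => // u u_bnd; apply/eqP; rewrite eq_le negsum_ge0 andbT -M_eq0.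
by apply: n_max; rewrite in_itv.
Qed.

Lemma nonneg_invariant : (forall k, 0 <= x k 0) -> forall k t, 0 <= t -> 0 <= x k t.
Proof.
move=> x0 k t t0; rewrite leNgt; apply/negP => xt.
have n0 : negsum 0 <= 0 by rewrite /negsum big1 // => j _; exact: negpart_eq0.
have nt : 0 < negsum t.
  by apply: lt_le_trans (negpart_le_negsum k t); rewrite negpart_lt0 // oppr_gt0.
have [u0 [u00 u0t nu0 n_pos]] := last_root_before_pos t0 (negsum_cont_within (b := t) (lexx 0)) n0 nt.
have [del del0 n_eq0] := negsum_eq0_near u00 nu0.
pose u := Num.min (u0 + del) t.
have u0u : u0 < u by rewrite lt_min ltrDl del0.
have ut : u <= t by rewrite ge_min lexx orbT.
by have := n_pos u u0u ut; rewrite n_eq0 ?ltxx // (ltW u0u) ge_min lexx.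
Qed.

End NonnegInvariance.

Section Dissipation.
Variables (f df W dW : R -> R) (D k m : R).
Hypothesis D_gt0 : 0 < D.
Hypothesis k_gt0 : 0 < k.
Hypothesis f_ge0 : forall t, 0 <= t -> 0 <= f t.
Hypothesis f_derive : forall t : R, 0 < t -> is_derive t 1 f (df t).
Hypothesis df_ge : forall t : R, 0 < t -> - D <= df t.
Hypothesis W_derive : forall t : R, 0 < t -> is_derive t 1 W (dW t).
Hypothesis dW_le : forall t : R, 0 < t -> dW t <= - (k * f t).
Hypothesis W_ge : forall t : R, 0 < t -> m <= W t.

Lemma dissipation_nonincreasing a b : 0 < a -> a <= b -> W b <= W a.
Proof.
move=> a0 ab; have [c /andP[ac cb] eq] := MVT_pos a0 ab W_derive.
have c0 : 0 < c by exact: lt_le_trans ac.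
have : dW c <= 0.
  by apply: le_trans (dW_le c0) _; rewrite oppr_le0 mulr_ge0 ?(ltW k_gt0) ?f_ge0 ?(ltW c0).
have : 0 <= b - a by rewrite subr_ge0.
nra.
Qed.

(* Since f decreases at rate at most D, a value e of f at t1 keeps f above e / 2
   for a time e / (2 D), during which W loses at least k e^2 / (4 D). *)
Lemma dissipation_drop t1 e : 0 < t1 -> 0 < e -> e <= f t1 ->
  W (t1 + e / (2 * D)) <= W t1 - k * (e / 2) * (e / (2 * D)).
Proof.
move=> t10 e0 et1; set tau := e / (2 * D).
have tau0 : 0 < tau by rewrite divr_gt0 // mulr_gt0.
have Dtau : D * tau = e / 2 by rewrite /tau; field; rewrite gt_eqF.
have f_half u : t1 <= u <= t1 + tau -> e / 2 <= f u.
  move=> /andP[t1u utau]; have [c /andP[t1c _] eq] := MVT_pos t10 t1u f_derive.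
  have := df_ge (lt_le_trans t10 t1c).
  have : D * (u - t1) <= D * tau by apply: ler_wpM2l; [exact: ltW | lra].
  have : 0 <= u - t1 by rewrite subr_ge0.
  nra.
have t1tau : t1 <= t1 + tau by rewrite lerDl ltW.
have [c /andP[t1c ctau] eq] := MVT_pos t10 t1tau W_derive.
have c0 : 0 < c by exact: lt_le_trans t1c.
have kf : k * (e / 2) <= k * f c.
  by rewrite ler_wpM2l ?(ltW k_gt0) // f_half // t1c ctau.
have : dW c * tau <= - (k * (e / 2)) * tau.
  by rewrite ler_wpM2r ?(ltW tau0) //; apply: le_trans (dW_le c0) _; rewrite lerN2.
move: eq; rewrite addrAC subrr add0r; lra.
Qed.

Lemma dissipation_cvg0 : f @ +oo --> 0.
Proof.
apply/cvgrPdist_lt => e e0.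
suff [M M_ge1 f_lt] : exists2 M, 1 <= M & forall t, M < t -> f t < e.
  exists M; split; first exact: num_real.
  move=> t Mt; have t0 : 0 <= t by rewrite (le_trans _ (ltW Mt)) // (le_trans ler01).
  by rewrite sub0r normrN ger0_norm ?f_ge0 // f_lt.
apply: contrapT => no_bound.
have spike M : 1 <= M -> exists2 t, M < t & e <= f t.
  move=> M1; apply: contrapT => no_spike; apply: no_bound; exists M => // t Mt.
  by rewrite ltNge; apply: contra_notN no_spike => et; exists t.
pose drop := k * (e / 2) * (e / (2 * D)).
have drop0 : 0 < drop by rewrite !mulr_gt0 ?invr_gt0 ?mulr_gt0.
have descent n : exists2 t, 1 <= t & W t <= W 1 - n%:R * drop.
  elim: n => [|n [t t1 Wt]]; first by exists 1; rewrite ?mul0r ?subr0.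
  have [t' tt' et'] := spike t t1.
  have t'0 : 0 < t' by rewrite (lt_le_trans ltr01) // (le_trans t1) ?ltW.
  exists (t' + e / (2 * D)).
    by rewrite (le_trans t1) // (le_trans (ltW tt')) // lerDl divr_ge0 ?mulr_ge0 ?ltW.
  have := dissipation_drop t'0 e0 et'; have := dissipation_nonincreasing (lt_le_trans ltr01 t1) (ltW tt').
  rewrite -/drop -addn1 natrD mulrDl mul1r; lra.
have Wm : 0 <= (W 1 - m) / drop by rewrite divr_ge0 ?subr_ge0 ?W_ge ?ltW.
have [t t1 Wt] := descent (Num.Def.archi_bound ((W 1 - m) / drop)).
have := archi_boundP Wm; rewrite ltr_pdivrMr // => Wlt.
have := W_ge (lt_le_trans ltr01 t1); lra.
Qed.

End Dissipation.
End RealFunctions.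

Section SubinvariantVector.
Variables (R : realType) (N : nat) (A : 'M[R]_N).

Lemma bigmin_attained (I : Type) (s : seq I) (F : I -> R) (x0 : R) :
  \big[Order.min/x0]_(i <- s) F i = x0 \/
  exists i, \big[Order.min/x0]_(i <- s) F i = F i.
Proof.
elim: s => [|a s IH]; first by left; rewrite big_nil.
rewrite big_cons /Order.min; case: ifP => _; first by right; exists a.
by case: IH => [->|[i ->]]; [left | right; exists i].
Qed.

Lemma spectral_radius_ge_root (t : R) :
  0 <= t -> root (char_poly A) t -> t <= spectral_radius A.
Proof.
move=> t0 rt.
set S := [set complex.Re `|l| | l in
  [set l | eigenvalue (map_mx (fun x : R => real_complex R x) A) l]].
have eig_char l : eigenvalue (map_mx (fun x : R => real_complex R x) A) l =
    root (map_poly (real_complex R) (char_poly A)) l.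
  by rewrite eigenvalue_root_char (map_char_poly (real_complex R)).
have St : S t.
  exists (t%:C)%C; last by rewrite ger0_norm // ler0c.
  by rewrite /= eig_char; exact: rmorph_root.
suff hS : has_sup S by exact: (sup_upper_bound hS St).
split; first by exists t.
have [r hr] := closed_field_poly_normal (map_poly (real_complex R) (char_poly A)).
have monic_r : lead_coef (map_poly (real_complex R) (char_poly A)) = 1.
  by rewrite lead_coef_map /= (monicP (char_poly_monic A)) rmorph1.
exists (\sum_(z <- r) complex.Re `|z|) => y [l eig_l <-].
have lr : l \in r by move: eig_l; rewrite /= eig_char hr monic_r scale1r root_prod_XsubC.
rewrite (big_rem _ lr) /= lerDl; apply: sumr_ge0 => z _.
by have := normr_ge0 z; rewrite lecE => /andP[_].
Qed.

Definition adj_colsum (j : 'I_N) : {poly R} := \sum_k (\adj (char_poly_mx A)) k j.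

(* Column sums of adj(X I - A) (X I - A) = char_poly A * I, evaluated at t. *)
Lemma adj_colsum_char_poly (t : R) j :
  t * (adj_colsum j).[t] - \sum_l (adj_colsum l).[t] * A l j = (char_poly A).[t].
Proof.
have adjK k : \sum_l (\adj (char_poly_mx A)) k l * (char_poly_mx A) l j =
    (char_poly A) *+ (k == j).
  by have := congr1 (fun M : 'M[{poly R}]_N => M k j) (mul_adj_mx (char_poly_mx A)); rewrite !mxE.
have colsumK : \sum_l adj_colsum l * (char_poly_mx A) l j = char_poly A.
  rewrite /adj_colsum; under eq_bigr do rewrite mulr_suml.
  rewrite exchange_big /=; under eq_bigr do rewrite adjK.
  by rewrite (bigD1 j) //= eqxx mulr1n big1 ?addr0 // => k /negbTE ->.
rewrite -colsumK [RHS]horner_sum.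
under [RHS]eq_bigr do rewrite hornerM !mxE hornerD hornerN hornerMn hornerX hornerC.
under [RHS]eq_bigr do rewrite mulrBr.
rewrite sumrB; congr (_ - _).
rewrite (bigD1 j) // eqxx mulr1n big1; first by rewrite Monoid.mulm1 mulrC.
by move=> k /andP[_ /negbTE ->]; rewrite mulr0n mulr0.
Qed.

Lemma char_poly_horner_neq0 (t : R) :
  0 <= t -> spectral_radius A < t -> (char_poly A).[t] != 0.
Proof.
move=> t0 rho_t; apply/negP => /eqP Dt.
by have := spectral_radius_ge_root t0 (introT eqP Dt); rewrite leNgt rho_t.
Qed.

(* The row vector 1^T (t I - A)^-1, by Cramer's rule. *)
Definition resolvent_colsum (t : R) j := (adj_colsum j).[t] / (char_poly A).[t].

Lemma resolvent_colsumE (t : R) j : (char_poly A).[t] != 0 ->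
  t * resolvent_colsum t j - \sum_l resolvent_colsum t l * A l j = 1.
Proof.
move=> Dt; rewrite /resolvent_colsum; under eq_bigr do rewrite mulrAC.
by rewrite -mulr_suml mulrA -mulrBl adj_colsum_char_poly divff.
Qed.

Hypothesis A_ge0 : forall i j, 0 <= A i j.

Lemma resolvent_colsum_min (t : R) j : (char_poly A).[t] != 0 ->
  (forall l, resolvent_colsum t j <= resolvent_colsum t l) ->
  1 <= (t - \sum_l A l j) * resolvent_colsum t j.
Proof.
move=> Dt w_min.
have : resolvent_colsum t j * \sum_l A l j <= \sum_l resolvent_colsum t l * A l j.
  by rewrite mulr_sumr; apply: ler_sum => l _; exact: ler_wpM2r.
by have := resolvent_colsumE j Dt; lra.
Qed.

(* 1^T (t I - A)^-1 is positive for large t, and by resolvent_colsum_min its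
   minimum cannot vanish on [mu, +oo): by continuity it stays positive down to mu. *)
Lemma subinvariant_pos_vector (mu : R) : 0 < mu -> spectral_radius A < mu ->
  exists v : 'I_N -> R,
    (forall j, 0 < v j) /\ (forall j, \sum_i v i * A i j <= mu * v j).
Proof.
move=> mu0 rho_mu; pose w := resolvent_colsum.
have D_neq0 t : mu <= t -> (char_poly A).[t] != 0.
  by move=> mut; apply: char_poly_horner_neq0 (lt_le_trans rho_mu mut); exact: le_trans (ltW mu0) mut.
pose g t := \big[Order.min/1]_j w t j.
have g_le t j : g t <= w t j by exact: bigmin_le.
have g_attained t : g t <= 0 -> exists2 j, g t = w t j & forall l, w t j <= w t l.
  move=> gt0; have [g1 | [j gj]] := bigmin_attained (index_enum 'I_N) (w t) 1.
    by move: gt0; rewrite /g g1; lra.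
  by exists j; [exact: gj | move=> l; rewrite -[w t j]gj; exact: g_le].
pose T := mu + 1 + \sum_j \sum_l A l j.
have colsum_le j : \sum_l A l j <= \sum_j \sum_l A l j.
  by rewrite [leRHS](bigD1 j) //= lerDl; apply: sumr_ge0 => k _; exact: sumr_ge0.
have sum_ge0 : 0 <= \sum_j \sum_l A l j by apply: sumr_ge0 => k _; exact: sumr_ge0.
have muT : mu <= T by rewrite /T; lra.
have gT : 0 < g T.
  rewrite ltNge; apply/negP => gT0; have [j gj w_min] := g_attained T gT0.
  have T_col : 0 <= T - \sum_l A l j by have := colsum_le j; rewrite /T; lra.
  have wT : w T j <= 0 by rewrite -gj.
  have := resolvent_colsum_min (D_neq0 T muT) w_min; rewrite -/w.
  by have := mulr_ge0_le0 T_col wT; lra.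
have g_cont : {within `[mu, T], continuous g}.
  apply: continuous_in_subspaceT => x; rewrite inE /= in_itv /= => /andP[mux _].
  apply: bigmin_continuous_at => j; apply: continuousM; first exact: continuous_horner.
  by apply: continuousV; [exact: D_neq0 | exact: continuous_horner].
have g_mu : 0 < g mu.
  rewrite ltNge; apply/negP => gmu0.
  have [|c /[!in_itv] /= /andP[muc _] gc] := IVT (v := 0) muT g_cont.
    by rewrite ge_min gmu0 /= le_max (ltW gT) orbT.
  have [|j gj w_min] := g_attained c; first by rewrite gc.
  by have := resolvent_colsum_min (D_neq0 c muc) w_min; rewrite -/w -gj gc mulr0 ler10.
exists (w mu); split; first by move=> j; exact: lt_le_trans g_mu (g_le mu j).
by move=> j; have := resolvent_colsumE j (D_neq0 mu (lexx mu)); rewrite -/w; lra.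
Qed.

End SubinvariantVector.

Lemma mul_ge_neg_bounds (R : realDomainType) (a b al bt a1 b1 : R) :
  0 <= al -> 0 <= bt -> 0 <= a1 -> 0 <= b1 ->
  - al <= a <= a1 -> - bt <= b <= b1 -> - (a1 * bt + b1 * al) <= a * b.
Proof.
move=> al0 bt0 a10 b10 /andP[ha1 ha2] /andP[hb1 hb2].
by case: (leP 0 a) => a0; case: (leP 0 b) => b0; nra.
Qed.

Lemma exists_between_rate (R : realFieldType) (be rho delta : R) :
  0 <= be -> 0 < delta -> be * rho < delta ->
  exists mu, [/\ 0 < mu, rho < mu & be * mu < delta].
Proof.
move=> be0 delta0 be_rho; pose r0 := Num.max 0 rho.
have r00 : 0 <= r0 by rewrite le_max lexx.
have rho_r0 : rho <= r0 by rewrite le_max lexx orbT.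
have be_r0 : be * r0 < delta.
  by rewrite /r0; case: (leP 0 rho) => [rho0 | /ltW rho0]; rewrite ?(max_r rho0) ?(max_l rho0) ?mulr0.
pose gap := (delta - be * r0) / (2 * (be + 1)).
have gap0 : 0 < gap by rewrite divr_gt0 ?subr_gt0 // mulr_gt0 //; lra.
have gapE : gap * (2 * (be + 1)) = delta - be * r0 by rewrite divfK // mulf_neq0 // gt_eqF //; lra.
exists (r0 + gap); split; [lra | lra | nra].
Qed.

Section SAIS.
Variables (R : realType) (N : nat) (A : 'M[R]_N) (beta0 betaa kappa delta : R).
Variables p q : R -> 'I_N -> R.
Hypothesis A01 : forall i j, A i j = 0 \/ A i j = 1.
Hypothesis beta0_gt0 : 0 < beta0.
Hypothesis delta_gt0 : 0 < delta.
Hypothesis kappa_gt0 : 0 < kappa.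
Hypothesis betaa_ge0 : 0 <= betaa.
Hypothesis sol : SAIS_solution A beta0 betaa kappa delta p q.
Hypothesis feas0 : feasible_state (p 0) (q 0).

Definition pressure t i := \sum_(j < N) A i j * p t j.

Definition sais_dp t i := beta0 * (1 - p t i - q t i) * pressure t i
  + betaa * q t i * pressure t i - delta * p t i.

Definition sais_dq t i := kappa * (1 - p t i - q t i) * pressure t i
  - betaa * q t i * pressure t i.

Lemma sais_p_derive i (t : R) : 0 < t -> is_derive t 1 (fun s => p s i) (sais_dp t i).
Proof. by have [_ [_ [dp _]]] := sol i; exact: dp. Qed.

Lemma sais_q_derive i (t : R) : 0 < t -> is_derive t 1 (fun s => q s i) (sais_dq t i).
Proof. by have [_ [_ [_ dq]]] := sol i; exact: dq. Qed.

(* Infected, alert and susceptible probabilities; feasibility means all are nonnegative. *)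
Definition sais_coord (k : 'I_N + 'I_N + 'I_N) t : R :=
  match k with
  | inl (inl i) => p t i
  | inl (inr i) => q t i
  | inr i => 1 - p t i - q t i
  end.

Definition sais_dcoord (k : 'I_N + 'I_N + 'I_N) t : R :=
  match k with
  | inl (inl i) => sais_dp t i
  | inl (inr i) => sais_dq t i
  | inr i => - sais_dp t i - sais_dq t i
  end.

Lemma sais_coord_cont k : {within `[0, +oo[, continuous (sais_coord k)}.
Proof.
case: k => [[i|i]|i] /=; have [cp [cq _]] := sol i => //.
have -> : sais_coord (inr i) = (fun=> 1) + (fun s => - p s i) + (fun s => - q s i).
  by apply: funext.
move=> x; apply: continuousD; last by apply: continuousN; exact: cq.
by apply: continuousD; [exact: cst_continuous | apply: continuousN; exact: cp].
Qed.

Lemma sais_coord_derive k (t : R) : 0 < t -> is_derive t 1 (sais_coord k) (sais_dcoord k t).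
Proof.
move=> t0; case: k => [[i|i]|i] /=; [exact: sais_p_derive | exact: sais_q_derive |].
rewrite -[- sais_dp t i]sub0r.
apply: is_deriveB; last exact: sais_q_derive.
by apply: is_deriveB; last exact: sais_p_derive.
Qed.

Section CoordinateBounds.
Variables (t m : R).
Hypothesis m_ge0 : 0 <= m.
Hypothesis coord_ge : forall k, - m <= sais_coord k t.
Hypothesis coord_ge1 : forall k, -1 <= sais_coord k t.

Let Nr : R := N%:R.

Lemma pressure_ge i : - (Nr * m) <= pressure t i.
Proof.
have : \sum_(j < N) - m <= pressure t i.
  apply: ler_sum => j _; have := coord_ge (inl (inl j)).
  by case: (A01 i j) => ->; rewrite ?mul1r // mul0r oppr_le0.
by rewrite sumr_const card_ord -mulr_natr mulNr mulrC.
Qed.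

Lemma pressure_le i : pressure t i <= 3 * Nr.
Proof.
have : pressure t i <= \sum_(j < N) 3.
  apply: ler_sum => j _; have := coord_ge1 (inl (inr j)); have := coord_ge1 (inr j).
  by case: (A01 i j) => -> /=; rewrite ?mul0r ?mul1r //; lra.
by rewrite sumr_const card_ord -[3 *+ N]mulr_natr.
Qed.

Lemma mul_pressure_ge y i : - m <= y <= 3 -> - (6 * Nr * m) <= y * pressure t i.
Proof.
move=> y_bnd; have Nr0 : 0 <= Nr by rewrite ler0n.
have := mul_ge_neg_bounds m_ge0 (mulr_ge0 Nr0 m_ge0) _ (mulr_ge0 _ Nr0) y_bnd
  (introT andP (conj (pressure_ge i) (pressure_le i))).
by rewrite !ler0n; move=> /(_ isT isT); lra.
Qed.

Lemma Nmul_pressure_ge y i : -1 <= y <= 0 -> - (Nr * m) <= - y * pressure t i.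
Proof.
move=> /andP[y1 y0]; have Nr0 : 0 <= Nr by rewrite ler0n.
have Ny_bnd : - 0 <= - y <= 1 by apply/andP; split; lra.
have := mul_ge_neg_bounds (lexx 0) (mulr_ge0 Nr0 m_ge0) ler01 (mulr_ge0 _ Nr0) Ny_bnd
  (introT andP (conj (pressure_ge i) (pressure_le i))).
by rewrite ler0n; move=> /(_ isT); lra.
Qed.

Lemma sais_dcoord_ge k : sais_coord k t < 0 ->
  - ((beta0 + betaa + kappa + delta) * (6 * Nr + 1) * m) <= sais_dcoord k t.
Proof.
have rates_ge0 : 0 <= beta0 + betaa + kappa + delta.
  by rewrite !addr_ge0 // ltW.
have Nr0 : 0 <= Nr by rewrite ler0n.
have bnd3 k' : sais_coord k' t <= 3.
  by case: k' => [[i|i]|i];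
    move: (coord_ge1 (inl (inl i))) (coord_ge1 (inl (inr i))) (coord_ge1 (inr i)) => /=; lra.
have coord_bnd k' : - m <= sais_coord k' t <= 3 by rewrite coord_ge bnd3.
have sX i : - (6 * Nr * m) <= (1 - p t i - q t i) * pressure t i :=
  mul_pressure_ge i (coord_bnd (inr i)).
have qX i : - (6 * Nr * m) <= q t i * pressure t i := mul_pressure_ge i (coord_bnd (inl (inr i))).
have Nm0 : 0 <= Nr * m := mulr_ge0 Nr0 m_ge0.
have f1 : 0 <= beta0 * (Nr * m) by rewrite mulr_ge0 // ltW.
have f2 : 0 <= betaa * (Nr * m) by rewrite mulr_ge0.
have f3 : 0 <= kappa * (Nr * m) by rewrite mulr_ge0 // ltW.
have f4 : 0 <= delta * (Nr * m) by rewrite mulr_ge0 // ltW.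
have g1 : 0 <= beta0 * m by rewrite mulr_ge0 // ltW.
have g2 : 0 <= betaa * m by rewrite mulr_ge0.
have g3 : 0 <= kappa * m by rewrite mulr_ge0 // ltW.
have g4 : 0 <= delta * m by rewrite mulr_ge0 // ltW.
case: k => [[i|i]|i] /= neg; rewrite /sais_dp /sais_dq.
- have := ler_wpM2l (ltW beta0_gt0) (sX i); have := ler_wpM2l betaa_ge0 (qX i).
  have : delta * p t i <= 0 by rewrite pmulr_rle0 // ltW.
  lra.
- have neg_bnd : -1 <= q t i <= 0 by rewrite (ltW neg) andbT; exact: coord_ge1 (inl (inr i)).
  have := ler_wpM2l (ltW kappa_gt0) (sX i).
  have := ler_wpM2l betaa_ge0 (Nmul_pressure_ge i neg_bnd).
  lra.
- have neg_bnd : -1 <= 1 - p t i - q t i <= 0 by rewrite (ltW neg) andbT; exact: coord_ge1 (inr i).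
  have b0k : 0 <= beta0 + kappa by rewrite addr_ge0 // ltW.
  have := ler_wpM2l b0k (Nmul_pressure_ge i neg_bnd).
  have := ler_wpM2l (ltW delta_gt0) (coord_ge (inl (inl i)) : - m <= p t i).
  lra.
Qed.

End CoordinateBounds.

Lemma sais_feasible t : 0 <= t -> feasible_state (p t) (q t).
Proof.
move=> t0 i.
pose L := (beta0 + betaa + kappa + delta) * (6 * N%:R + 1).
have L0 : 0 <= L.
  by apply: mulr_ge0; [rewrite !addr_ge0 // ltW | rewrite addr_ge0 ?mulr_ge0 ?ler0n].
have dcoord_ge s : 0 < s -> (forall j, -1 <= sais_coord j s) ->
    forall k, sais_coord k s < 0 -> - (L * negsum sais_coord s) <= sais_dcoord k s.
  move=> _ ge1 k; rewrite /L; apply: (sais_dcoord_ge (negsum_ge0 _ _) _ ge1) => j.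
  exact: Nnegsum_le.
have coord0 k : 0 <= sais_coord k 0.
  by case: k => [[j|j]|j] /=; have [? [? ?]] := feas0 j; lra.
have inv k := nonneg_invariant L0 sais_coord_cont sais_coord_derive dcoord_ge coord0 k t0.
by have := inv (inl (inl i)); have := inv (inl (inr i)); have := inv (inr i) => /=; lra.
Qed.

Lemma pressure_ge0 t i : 0 <= t -> 0 <= pressure t i.
Proof.
move=> t0; apply: sumr_ge0 => j _; have [p0 _] := sais_feasible t0 j.
by case: (A01 i j) => ->; rewrite ?mul0r ?mul1r.
Qed.

Lemma sais_dp_ge t i : 0 < t -> - delta <= sais_dp t i.
Proof.
move=> t0; have [p0 [q0 pq1]] := sais_feasible (ltW t0) i.
have X0 := pressure_ge0 i (ltW t0).
have s0 : 0 <= 1 - p t i - q t i by lra.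
have : 0 <= beta0 * (1 - p t i - q t i) * pressure t i by rewrite !mulr_ge0 // ltW.
have : 0 <= betaa * q t i * pressure t i by rewrite !mulr_ge0.
have : delta * p t i <= delta by rewrite ler_piMr ?(ltW delta_gt0) //; lra.
rewrite /sais_dp; lra.
Qed.

(* Chosen so that p + alert_weight * q evolves as an SIS model with rate beta_eq. *)
Definition alert_weight := (betaa - beta0) / (kappa + betaa).

Lemma beta_eqE : beta_eq beta0 betaa kappa = betaa * (beta0 + kappa) / (kappa + betaa).
Proof.
have kb : 0 < kappa + betaa by rewrite ltr_wpDr.
by rewrite /beta_eq; field; rewrite !gt_eqF.
Qed.

Lemma beta_eq_ge0 : 0 <= beta_eq beta0 betaa kappa.
Proof. by rewrite beta_eqE divr_ge0 ?mulr_ge0 ?addr_ge0 // ltW. Qed.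

Lemma sais_dp_dq_comb t i : sais_dp t i + alert_weight * sais_dq t i =
  beta_eq beta0 betaa kappa * (1 - p t i) * pressure t i - delta * p t i.
Proof.
have kb : 0 < kappa + betaa by rewrite ltr_wpDr.
by rewrite beta_eqE /sais_dp /sais_dq /alert_weight; field; rewrite gt_eqF.
Qed.

Section Lyapunov.
Variables (v : 'I_N -> R) (mu : R).
Hypothesis v_gt0 : forall i, 0 < v i.
Hypothesis vA_le : forall j, \sum_i v i * A i j <= mu * v j.

Definition lyap t := \sum_i v i * (p t i + alert_weight * q t i).

Definition lyap_rate t :=
  \sum_i v i * (beta_eq beta0 betaa kappa * (1 - p t i) * pressure t i - delta * p t i).

Lemma lyap_derive (t : R) : 0 < t -> is_derive t 1 lyap (lyap_rate t).
Proof.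
move=> t0.
have term i : is_derive t 1 (fun s => v i * (p s i + alert_weight * q s i))
    (v i * (beta_eq beta0 betaa kappa * (1 - p t i) * pressure t i - delta * p t i)).
  rewrite -sais_dp_dq_comb.
  exact: is_deriveZ (is_deriveD (sais_p_derive i t0) (is_deriveZ _ (sais_q_derive i t0))).
by have := is_derive_sum term; rewrite fct_sumE.
Qed.

Lemma lyap_rate_le t : 0 < t ->
  lyap_rate t <= (beta_eq beta0 betaa kappa * mu - delta) * \sum_i v i * p t i.
Proof.
move=> t0; have t0' := ltW t0; set be := beta_eq _ _ _.
have be0 : 0 <= be := beta_eq_ge0.
have drop_p : lyap_rate t <= \sum_i v i * (be * pressure t i - delta * p t i).
  apply: ler_sum => i _; rewrite ler_wpM2l ?(ltW (v_gt0 i)) // lerD2r.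
  have [p0 _] := sais_feasible t0' i; have X0 := pressure_ge0 i t0'.
  by rewrite -mulrA ler_wpM2l // ler_piMl // gerBl.
have weighted : \sum_i v i * pressure t i <= mu * \sum_i v i * p t i.
  rewrite /pressure; under eq_bigr do rewrite mulr_sumr.
  rewrite exchange_big /= mulr_sumr; apply: ler_sum => j _.
  under eq_bigr do rewrite mulrA.
  rewrite -mulr_suml mulrA ler_wpM2r //; first by have [] := sais_feasible t0' j.
have split_sum : \sum_i v i * (be * pressure t i - delta * p t i) =
    be * \sum_i v i * pressure t i - delta * \sum_i v i * p t i.
  by rewrite !mulr_sumr -sumrB; apply: eq_bigr => i _; ring.
have := ler_wpM2l be0 weighted; lra.
Qed.

Lemma lyap_ge t : 0 <= t -> - `|alert_weight| * \sum_i v i <= lyap t.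
Proof.
move=> t0; rewrite mulr_sumr; apply: ler_sum => i _.
have [p0 [q0 pq1]] := sais_feasible t0 i.
have cq_norm : `|alert_weight * q t i| <= `|alert_weight|.
  by rewrite normrM (ger0_norm q0) ler_piMr //; lra.
have cq_ge := lerNnormlW cq_norm.
by rewrite [_ * v i]mulrC ler_wpM2l ?(ltW (v_gt0 i)) // (le_trans cq_ge) // lerDr.
Qed.

End Lyapunov.

Lemma sais_infection_cvg0 (v : 'I_N -> R) (mu : R) :
  (forall i, 0 < v i) -> (forall j, \sum_i v i * A i j <= mu * v j) ->
  beta_eq beta0 betaa kappa * mu < delta ->
  forall i, (fun t => p t i) @ +oo --> 0.
Proof.
move=> v_gt0 vA_le be_mu i; set be := beta_eq _ _ _ in be_mu.
have rate_gt0 : 0 < (delta - be * mu) * v i by rewrite mulr_gt0 ?subr_gt0.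
apply: (dissipation_cvg0 (W := lyap v) (m := - `|alert_weight| * \sum_j v j)
  delta_gt0 rate_gt0 _ (sais_p_derive i) (@sais_dp_ge^~ i) (lyap_derive v)).
- by move=> t t0; have [] := sais_feasible t0 i.
- move=> t t0; apply: le_trans (lyap_rate_le v_gt0 vA_le t0) _.
  have vp_le : v i * p t i <= \sum_j v j * p t j.
    rewrite (bigD1 i) //= lerDl; apply: sumr_ge0 => j _.
    by have [p0 _] := sais_feasible (ltW t0) j; rewrite mulr_ge0 ?(ltW (v_gt0 j)).
  rewrite -/be -mulrA -mulNr opprB; apply: ler_wnM2l vp_le.
  by rewrite subr_le0 ltW.
- by move=> t t0; apply: lyap_ge => //; exact: ltW.
Qed.

End SAIS.

Theorem theorem3 (R : realType) (N : nat) (A : 'M[R]_N)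
    (beta0 betaa kappa delta : R) :
  adjacency01 A ->
  0 < beta0 -> 0 < delta -> 0 < kappa -> 0 <= betaa -> betaa < beta0 ->
  (* beta_eq / delta < 1 / rho(A), written multiplicatively (rho(A) = 0 means 1/rho = +oo) *)
  beta_eq beta0 betaa kappa * spectral_radius A < delta ->
  exists eps : R, 0 < eps /\
    forall p q : R -> 'I_N -> R,
      SAIS_solution A beta0 betaa kappa delta p q ->
      feasible_state (p 0) (q 0) ->
      (forall i, p 0 i < eps) ->
      forall i, (fun t => p t i) @ +oo --> (0 : R).
Proof.
(* The decay is global, so eps = 1 works. *)
move=> [A01 _] beta0_gt0 delta_gt0 kappa_gt0 betaa_ge0 _ rate_lt.
have A_ge0 i j : 0 <= A i j by case: (A01 i j) => ->.
have be0 := beta_eq_ge0 beta0_gt0 kappa_gt0 betaa_ge0.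
have [mu [mu0 rho_mu be_mu]] := exists_between_rate be0 delta_gt0 rate_lt.
have [v [v_gt0 vA_le]] := subinvariant_pos_vector A_ge0 mu0 rho_mu.
exists 1; split => // p q sol feas0 _.
exact (sais_infection_cvg0 A01 beta0_gt0 delta_gt0 kappa_gt0 betaa_ge0 sol feas0
  v_gt0 vA_le be_mu).
Qed.
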